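(* No deterministic max-finding algorithm has error less than $2$: for every deterministic algorithm that, using comparisons, outputs one of its input elements, there exist an input and comparator answers consistent with the model for which the output element $x$ satisfies $x \le x^* - 2$, where $x^*$ is the maximum value of an input element.
   Context: Model of imprecise comparisons: there are $n$ elements, each with a fixed unknown real value; we identify an element with its value. An algorithm accesses the elements only through a comparator: asked to compare $x_i$ and $x_j$, it answers either ''$x_i \ge x_j$'' or ''$x_j \ge x_i$''. If $|x_i-x_j|>1$ the answer is correct; if $|x_i-x_j|\le 1$ the answer is arbitrary (possibly adversarial and adaptive). The error of a max-finding algorithm is the smallest $k$ such that, for every input and every comparator behaviour consistent with this rule, the output $x$ satisfies $x \ge x^*-k$, where $x^*$ is the maximum value among the input elements. *)

From Stdlib Require Import Reals.
From mathcomp Require Import all_boot.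

Set Implicit Arguments.
Unset Strict Implicit.
Unset Printing Implicit Defensive.

(* A deterministic comparison-based algorithm on m input elements, indexed by
   'I_m, is a (finite, well-founded) decision tree:
   - [Out o]        : stop and output element o;
   - [Cmp i j t u]  : ask the comparator to compare x_i and x_j; continue with
                      t if the answer is "x_i >= x_j", with u if the answer is
                      "x_j >= x_i". *)
Inductive alg_tree (m : nat) : Type :=
| Out : 'I_m -> alg_tree m
| Cmp : 'I_m -> 'I_m -> alg_tree m -> alg_tree m -> alg_tree m.

(* The answer "x_i >= x_j" is consistent with the imprecise-comparison model
   iff it is correct or |x_i - x_j| <= 1. *)
Definition ans_ok (m : nat) (x : 'I_m -> R) (i j : 'I_m) : Prop :=
  Rle (x j) (x i) \/ Rle (Rabs (Rminus (x i) (x j))) 1.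

(* [outcome t x o]: there is a comparator behaviour consistent with the model
   on input x (answers possibly arbitrary/adaptive when values are within 1)
   under which the algorithm t outputs element o. *)
Inductive outcome (m : nat) (x : 'I_m -> R) : alg_tree m -> 'I_m -> Prop :=
| outcome_out o : outcome x (Out o) o
| outcome_ge i j t u o : ans_ok x i j -> outcome x t o -> outcome x (Cmp i j t u) o
| outcome_le i j t u o : ans_ok x j i -> outcome x u o -> outcome x (Cmp i j t u) o.

Definition xmax (n : nat) (x : 'I_n.+1 -> R) : R :=
  \big[Rmax/x ord0]_(i < n.+1) x i.

(* Three elements suffice.  The adversary answers every comparison according
   to the cyclic tournament in which element [k] beats element [k + 1 (mod 3)],
   which determines the output [o] of the algorithm.  Only afterwards are the
   values fixed: [o], [o + 1], [o + 2] get 0, 1, 2.  Every answer is then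
   consistent with the model (either correct, or between values at distance 1),
   yet the output is 2 below the maximum. *)

From Stdlib Require Import Reals Lra.
From mathcomp Require Import all_boot.

Set Implicit Arguments.
Unset Strict Implicit.
Unset Printing Implicit Defensive.

Fixpoint follow (m : nat) (wins : rel 'I_m) (t : alg_tree m) : 'I_m :=
  match t with
  | Out o => o
  | Cmp i j t u => if wins i j then follow wins t else follow wins u
  end.

Lemma outcome_follow (m : nat) (x : 'I_m -> R) (wins : rel 'I_m) :
    (forall i j, wins i j -> ans_ok x i j) ->
    (forall i j, ~~ wins i j -> ans_ok x j i) ->
  forall t, outcome x t (follow wins t).
Proof.
move=> win_ok lose_ok; elim=> [o|i j t IHt u IHu] /=; first exact: outcome_out.
by case: ifP => [/win_ok|/negbT/lose_ok] ?; [apply: outcome_ge|apply: outcome_le].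
Qed.

Lemma le_xmax (n : nat) (x : 'I_n.+1 -> R) (k : 'I_n.+1) : Rle (x k) (xmax x).
Proof.
rewrite /xmax; have : k \in index_enum 'I_n.+1 by rewrite mem_index_enum.
elim: (index_enum _) => [//|a s IHs]; rewrite in_cons big_cons.
case/orP=> [/eqP <-|/IHs le_ks]; first exact: Rmax_l.
exact: Rle_trans le_ks (Rmax_r _ _).
Qed.

Definition cyclic_wins (i j : 'I_3) : bool :=
  (nat_of_ord j == i) || (nat_of_ord j == (i.+1 %% 3)%N).

(* Element [o + d (mod 3)] gets value [d]; the [+ 3] avoids truncated subtraction. *)
Definition rotated_values (o k : 'I_3) : R := INR ((k + 3 - o) %% 3).

Lemma rotated_values_wins (o i j : 'I_3) :
  cyclic_wins i j -> ans_ok (rotated_values o) i j.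
Proof.
case: o => [[|[|[|//]]] ?]; case: i => [[|[|[|//]]] ?]; case: j => [[|[|[|//]]] ?];
  rewrite /cyclic_wins /ans_ok /rotated_values //= => _;
  try (left; simpl; lra); right; simpl;
  (rewrite Rabs_left1 || rewrite Rabs_right); lra.
Qed.

Lemma cyclic_wins_total (i j : 'I_3) : ~~ cyclic_wins i j -> cyclic_wins j i.
Proof. by case: i => [[|[|[|//]]] ?]; case: j => [[|[|[|//]]] ?]. Qed.

Lemma rotated_values_gap (o : 'I_3) :
  Rle (rotated_values o o) (Rminus (xmax (rotated_values o)) 2).
Proof.
have := le_xmax (rotated_values o) (Ordinal (ltn_pmod (o + 2) (isT : 0 < 3))).
by case: o => [[|[|[|//]]] ?]; rewrite /rotated_values /=; simpl; lra.
Qed.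

Theorem mainTheorem2 (A : forall n : nat, alg_tree n.+1) :
  exists (n : nat) (x : 'I_n.+1 -> R) (o : 'I_n.+1),
    outcome x (A n) o /\ Rle (x o) (Rminus (xmax x) 2).
Proof.
set o := follow cyclic_wins (A 2).
exists 2, (rotated_values o), o; split; last exact: rotated_values_gap.
apply: outcome_follow => i j.
  exact: rotated_values_wins.
by move/cyclic_wins_total; apply: rotated_values_wins.
Qed.
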